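(* There are constants $C,C'>0$ such that for every $\delta>0$, every $R>1$, every $(\delta^2,R^2)$-lattice $(x_j)_{j\in J}$ in $F$ and every $(\delta,R)$-lattice $(\zeta_{j'})_{j'\in J'}$ in $E$, the family $(\zeta_{j'},x_j)_{(j,j')\in J\times J'}$ is a $(C\delta,C'R)$-lattice on $\mathcal N$.
   Context: Let $E$ be a complex Hilbert space, $F$ a real Hilbert space (both with their Euclidean distances), and $\Phi\colon E\times E\to F_{\mathbb C}$ a hermitian map (complex-linear in the first variable, conjugate-linear in the second); $\Phi(\zeta)=\Phi(\zeta,\zeta)$. $\mathcal N=E\times F$ with group law $(\zeta,x)(\zeta',x')=(\zeta+\zeta',x+x'+2\operatorname{Im}\Phi(\zeta,\zeta'))$, endowed with a fixed left-invariant distance $d$ which is homogeneous of degree $1$ with respect to the dilations $t\cdot(\zeta,x)=(t\zeta,t^2x)$, $t>0$. In a metric space, a family $(a_k)$ is a $(\delta,R)$-lattice if the balls $B(a_k,\delta)$ are pairwise disjoint and the balls $B(a_k,R\delta)$ cover the space. *)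

From HB Require Import structures.
From mathcomp Require Import all_boot all_order all_algebra.
From mathcomp Require Import complex.
From mathcomp Require Import reals.
Set Implicit Arguments. Unset Strict Implicit. Unset Printing Implicit Defensive.
Import Order.TTheory GRing.Theory Num.Theory.
Local Open Scope ring_scope.
Local Open Scope complex_scope.

Definition Espace (R : realType) (n : nat) := 'rV[R[i]]_n.
Definition Fspace (R : realType) (m : nat) := 'rV[R]_m.
Definition FCspace (R : realType) (m : nat) := 'rV[R[i]]_m.

Definition distE (R : realType) (n : nat) (z w : Espace R n) : R :=
  Num.sqrt (\sum_(i < n) ((@complex.Re R ((z - w) 0 i)) ^+ 2 + (@complex.Im R ((z - w) 0 i)) ^+ 2)).
Definition distF (R : realType) (m : nat) (x y : Fspace R m) : R :=
  Num.sqrt (\sum_(i < m) ((x - y) 0 i) ^+ 2).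

Definition ImF (R : realType) (m : nat) (v : FCspace R m) : Fspace R m :=
  map_mx (@complex.Im R) v.

Definition hermitian_map (R : realType) (n m : nat)
  (Phi : Espace R n -> Espace R n -> FCspace R m) : Prop :=
  [/\ (forall (a : R[i]) z z' w, Phi (a *: z + z') w = a *: Phi z w + Phi z' w),
      (forall (a : R[i]) z w w', Phi z (a *: w + w') = a^* *: Phi z w + Phi z w')
    & (forall z w, Phi w z = map_mx (@conjc R) (Phi z w))].

Definition Ngroup (R : realType) (n m : nat) := (Espace R n * Fspace R m)%type.

Definition mulN (R : realType) (n m : nat)
  (Phi : Espace R n -> Espace R n -> FCspace R m) (p q : Ngroup R n m)
  : Ngroup R n m :=
  (p.1 + q.1, p.2 + q.2 + 2%:R *: ImF (Phi p.1 q.1)).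

Definition dilN (R : realType) (n m : nat) (t : R) (p : Ngroup R n m)
  : Ngroup R n m := (t%:C *: p.1, t ^+ 2 *: p.2).

Definition is_distance (T : Type) (R : realType) (d : T -> T -> R) : Prop :=
  [/\ (forall x y, d x y = 0 <-> x = y),
      (forall x y, d x y = d y x)
    & (forall x y z, d x z <= d x y + d y z)].

Definition left_invariant (R : realType) (n m : nat)
  (Phi : Espace R n -> Espace R n -> FCspace R m)
  (d : Ngroup R n m -> Ngroup R n m -> R) : Prop :=
  forall g p q, d (mulN Phi g p) (mulN Phi g q) = d p q.

Definition homogeneous1 (R : realType) (n m : nat)
  (d : Ngroup R n m -> Ngroup R n m -> R) : Prop :=
  forall t p q, 0 < t -> d (dilN t p) (dilN t q) = t * d p q.

Definition ball_of (T : Type) (R : realType) (d : T -> T -> R) (a : T) (r : R)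
  : T -> Prop := fun x => d a x < r.

Definition is_lattice (T K : Type) (R : realType) (d : T -> T -> R)
  (a : K -> T) (delta Rc : R) : Prop :=
  (forall k k', k <> k' -> forall x,
      ~ (ball_of d (a k) delta x /\ ball_of d (a k') delta x))
  /\ (forall x, exists k, ball_of d (a k) (Rc * delta) x).

From HB Require Import structures.
From mathcomp Require Import all_boot all_order all_algebra.
From mathcomp Require Import complex.
From mathcomp Require Import reals.
From mathcomp Require Import ring lra.
From mathcomp Require Import boolp classical_sets topology normedtype derive.
Import Order.TTheory GRing.Theory Num.Theory.
Import numFieldTopology.Exports numFieldNormedType.Exports.
Set Implicit Arguments. Unset Strict Implicit. Unset Printing Implicit Defensive.
Local Open Scope ring_scope.

(* Write N(p) = d(0, p) for the homogeneous norm defined by d, and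
   |p| = |z| + |x|^(1/2) for the gauge of p = (z, x), where |.| is the sup norm of real
   coordinates.  Everything rests on the comparison c |p| <= N(p) <= K |p|.
   Upper bound: expanding z over a real basis of E, the group law writes (z, 0) as the
   product of the horizontal pieces corrected by central elements (0, -2 Im Phi(., .)),
   and dilations show that scalars of modulus at most 1 cannot increase N; so N is bounded
   on the unit box, and homogeneity does the rest.
   Lower bound: the upper bound and the bilinearity of Im Phi make N continuous in real
   coordinates, so N has a positive minimum on a compact annulus containing the points of
   gauge 1.
   Two distinct points (zeta_j', x_j) of the product family are then at gauge distance at
   least delta / (2n + m + 1): use the lattice in E if the j' differ, and the lattice in F
   otherwise, since Im Phi(z, z) = 0.  Conversely, (z, x) is within gauge distance
   2 R delta of (zeta_j', x_j) once zeta_j' is chosen close to z and then x_j close to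
   x - 2 Im Phi(zeta_j', z). *)

Section RealCoordinates.
Variables (R : realType) (n : nat).
Local Open Scope complex_scope.

Definition coordE (z : Espace R n) : 'rV[R]_(n + n) :=
  row_mx (map_mx (@complex.Re R) z) (map_mx (@complex.Im R) z).

Definition of_coordE (v : 'rV[R]_(n + n)) : Espace R n :=
  \row_i (lsubmx v 0 i +i* rsubmx v 0 i).

Lemma coordEK : cancel coordE of_coordE.
Proof.
by move=> z; apply/rowP => i; rewrite mxE row_mxKl row_mxKr !mxE; case: (z 0 i).
Qed.

Lemma of_coordEK : cancel of_coordE coordE.
Proof.
move=> v; rewrite -[RHS]hsubmxK; congr row_mx; apply/rowP => i; by rewrite !mxE.
Qed.

Lemma coordEB z w : coordE (z - w) = coordE z - coordE w.
Proof. by rewrite /coordE !map_mxB opp_row_mx add_row_mx. Qed.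

HB.instance Definition _ := GRing.isZmodMorphism.Build _ _ coordE coordEB.

Lemma coordEZ (a : R) z : coordE (a%:C *: z) = a *: coordE z.
Proof.
rewrite /coordE scale_row_mx; congr row_mx; apply/rowP => i; rewrite !mxE;
  by case: (z 0 i) => x y /=; rewrite mul0r ?subr0 ?addr0.
Qed.

Lemma of_coordEB v w : of_coordE (v - w) = of_coordE v - of_coordE w.
Proof. by apply/rowP => i; rewrite !mxE. Qed.

HB.instance Definition _ := GRing.isZmodMorphism.Build _ _ of_coordE of_coordEB.

Lemma of_coordEZ (a : R) v : of_coordE (a *: v) = a%:C *: of_coordE v.
Proof.
by apply/rowP => i; rewrite !mxE /=; apply/eqP; rewrite eq_complex /= !mul0r subr0 addr0 !eqxx.
Qed.

Definition basisE (c : 'I_(n + n)) : Espace R n := of_coordE (delta_mx 0 c).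

Lemma coordE_basis_sum z : z = \sum_c (coordE z 0 c)%:C *: basisE c.
Proof.
rewrite -{1}(coordEK z) {1}(row_sum_delta (coordE z)) raddf_sum.
by apply: eq_bigr => c _; rewrite -of_coordEZ.
Qed.

End RealCoordinates.

Arguments basisE {R n}.

Section SupNorm.
Variables (R : realType) (k : nat).
Implicit Types u v : 'rV[R]_k.

Lemma le_coord_mx_norm u c : `|u 0 c| <= `|u|.
Proof.
rewrite [leRHS]/Num.Def.normr /= mx_normrE.
exact: (le_bigmax 0 (fun ij : 'I_1 * 'I_k => `|u ij.1 ij.2|) (ord0, c)).
Qed.

Lemma mx_norm_le u r : 0 <= r -> (forall c, `|u 0 c| <= r) -> `|u| <= r.
Proof.
move=> r0 h; rewrite [leLHS]/Num.Def.normr /= mx_normrE.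
by apply/bigmax_leP; split => // -[i c] _ /=; rewrite (ord1 i).
Qed.

Definition l2norm u := Num.sqrt (\sum_c u 0 c ^+ 2).

Lemma l2norm0 : l2norm 0 = 0.
Proof. by rewrite /l2norm big1 ?sqrtr0 // => c _; rewrite mxE expr0n. Qed.

Lemma mx_norm_le_l2norm u : `|u| <= l2norm u.
Proof.
apply: mx_norm_le => [|c]; first exact: sqrtr_ge0.
rewrite -sqrtr_sqr ler_sqrt ?sumr_ge0 // => [|i _]; last exact: sqr_ge0.
by rewrite (bigD1 c) //= lerDl sumr_ge0 // => i _; rewrite sqr_ge0.
Qed.

Lemma l2norm_le u : l2norm u <= k.+1%:R * `|u|.
Proof.
have u0 := normr_ge0 u.
rewrite -[leRHS]ger0_norm ?mulr_ge0 // -sqrtr_sqr ler_sqrt ?sqr_ge0 //.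
apply: (@le_trans _ _ (\sum_(c < k) `|u| ^+ 2)).
  apply: ler_sum => c _.
  by rewrite -real_normK ?num_real // lerXn2r ?nnegrE ?le_coord_mx_norm.
rewrite sumr_const card_ord -[leLHS]mulr_natl exprMn; apply: ler_wpM2r; first exact: sqr_ge0.
by rewrite -natr1; have := ler0n R k; nra.
Qed.

End SupNorm.

Section RowBlockNorm.
Variables (R : realType) (k1 k2 : nat).

Lemma norm_lsubmx_le (u : 'rV[R]_(k1 + k2)) : `|lsubmx u| <= `|u|.
Proof. by apply: mx_norm_le => // c; rewrite mxE le_coord_mx_norm. Qed.

Lemma norm_rsubmx_le (u : 'rV[R]_(k1 + k2)) : `|rsubmx u| <= `|u|.
Proof. by apply: mx_norm_le => // c; rewrite mxE le_coord_mx_norm. Qed.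

Lemma norm_row_mx_le (a : 'rV[R]_k1) (b : 'rV[R]_k2) r :
  `|a| <= r -> `|b| <= r -> `|row_mx a b| <= r.
Proof.
move=> ar br; apply: mx_norm_le => [|c]; first exact: le_trans ar.
rewrite -(splitK c); case: (split c) => i /=; rewrite ?row_mxEl ?row_mxEr;
  exact: le_trans (le_coord_mx_norm _ _) _.
Qed.

End RowBlockNorm.

Lemma distE_l2norm (R : realType) (n : nat) (z w : Espace R n) :
  distE z w = l2norm (coordE (z - w)).
Proof.
rewrite /distE /l2norm big_split_ord big_split /=; congr (Num.sqrt (_ + _));
  by apply: eq_bigr => i _; rewrite /coordE ?row_mxEl ?row_mxEr !mxE.
Qed.

Section ImaginaryPart.
Variables (R : realType) (n m : nat) (Phi : Espace R n -> Espace R n -> FCspace R m).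
Hypothesis hPhi : hermitian_map Phi.
Local Open Scope complex_scope.
Implicit Types z w : Espace R n.

Definition ImPhi z w : 'rV[R]_m := ImF (Phi z w).

Lemma ImPhiDl z z' w : ImPhi (z + z') w = ImPhi z w + ImPhi z' w.
Proof.
case: hPhi => linPhi _ _; have := linPhi 1 z z' w.
by rewrite !scale1r /ImPhi /ImF => ->; rewrite map_mxD.
Qed.

Lemma ImPhi0l w : ImPhi 0 w = 0.
Proof. by apply: (@addrI _ (ImPhi 0 w)); rewrite -ImPhiDl !addr0. Qed.

Lemma ImPhiZl (a : R) z w : ImPhi (a%:C *: z) w = a *: ImPhi z w.
Proof.
case: hPhi => linPhi _ _; have := linPhi a%:C z 0 w.
rewrite addr0 /ImPhi /ImF => ->.
rewrite map_mxD -[map_mx _ (Phi 0 w)]/(ImPhi 0 w) ImPhi0l addr0.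
by apply/rowP => j; rewrite !mxE; case: (Phi z w 0 j) => x y /=; rewrite mul0r addr0.
Qed.

Lemma ImPhiC z w : ImPhi w z = - ImPhi z w.
Proof.
case: hPhi => _ _ symPhi; apply/rowP => j.
by rewrite !mxE symPhi mxE; case: (Phi z w 0 j).
Qed.

Lemma ImPhi0r z : ImPhi z 0 = 0.
Proof. by rewrite ImPhiC ImPhi0l oppr0. Qed.

Lemma ImPhiDr z w w' : ImPhi z (w + w') = ImPhi z w + ImPhi z w'.
Proof. by rewrite ImPhiC ImPhiDl opprD -!ImPhiC. Qed.

Lemma ImPhiZr (a : R) z w : ImPhi z (a%:C *: w) = a *: ImPhi z w.
Proof. by rewrite ImPhiC ImPhiZl -scalerN -ImPhiC. Qed.

Lemma ImPhiNl z w : ImPhi (- z) w = - ImPhi z w.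
Proof. by rewrite -scaleN1r -(rmorphN1 (real_complex R)) ImPhiZl scaleN1r. Qed.

Lemma ImPhiNr z w : ImPhi z (- w) = - ImPhi z w.
Proof. by rewrite ImPhiC ImPhiNl -ImPhiC. Qed.

Lemma ImPhi_diag z : ImPhi z z = 0.
Proof.
apply/rowP => j; have := congr1 (fun M : 'rV[R]_m => M 0 j) (ImPhiC z z).
by rewrite /= !mxE; lra.
Qed.

Lemma ImPhi_suml (I : Type) (r : seq I) (P : pred I) (F : I -> Espace R n) w :
  ImPhi (\sum_(i <- r | P i) F i) w = \sum_(i <- r | P i) ImPhi (F i) w.
Proof.
exact: (big_morph (ImPhi^~ w) (fun z z' => ImPhiDl z z' w) (ImPhi0l w)).
Qed.

Lemma ImPhi_sumr (I : Type) (r : seq I) (P : pred I) (F : I -> Espace R n) z :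
  ImPhi z (\sum_(i <- r | P i) F i) = \sum_(i <- r | P i) ImPhi z (F i).
Proof. by rewrite ImPhiC ImPhi_suml -sumrN; apply: eq_bigr => i _; rewrite -ImPhiC. Qed.

Lemma ImPhi_basis_sum z w : ImPhi z w =
  \sum_c \sum_c' (coordE z 0 c * coordE w 0 c') *: ImPhi (basisE c) (basisE c').
Proof.
rewrite {1}(coordE_basis_sum z) {1}(coordE_basis_sum w) ImPhi_suml.
apply: eq_bigr => c _; rewrite ImPhiZl ImPhi_sumr scaler_sumr.
by apply: eq_bigr => c' _; rewrite ImPhiZr scalerA.
Qed.

Definition ImPhi_bound := \sum_c \sum_c' `|ImPhi (basisE c) (basisE c')|.

Lemma ImPhi_bound_ge0 : 0 <= ImPhi_bound.
Proof. by do 2!apply: sumr_ge0 => ? _. Qed.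

Lemma norm_ImPhi_le z w : `|ImPhi z w| <= ImPhi_bound * `|coordE z| * `|coordE w|.
Proof.
rewrite ImPhi_basis_sum /ImPhi_bound !mulr_suml; apply: le_trans (ler_norm_sum _ _ _) _.
apply: ler_sum => c _; rewrite !mulr_suml; apply: le_trans (ler_norm_sum _ _ _) _.
apply: ler_sum => c' _; rewrite normrZ normrM mulrC -!mulrA ler_wpM2l //.
by rewrite ler_pM ?le_coord_mx_norm.
Qed.

End ImaginaryPart.

Section HomogeneousNorm.
Variables (R : realType) (n m : nat) (Phi : Espace R n -> Espace R n -> FCspace R m)
  (d : Ngroup R n m -> Ngroup R n m -> R).
Hypotheses (hPhi : hermitian_map Phi) (hd : is_distance d)
  (hli : left_invariant Phi d) (hh : homogeneous1 d).
Local Open Scope complex_scope.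
Local Open Scope classical_set_scope.
Implicit Types (p q : Ngroup R n m) (z w : Espace R n) (x y : Fspace R m).

Definition oneN : Ngroup R n m := (0, 0).
Definition invN p : Ngroup R n m := (- p.1, - p.2).
Definition hnorm p := d oneN p.

Lemma mulVNE p q :
  mulN Phi (invN p) q = (q.1 - p.1, q.2 - p.2 - 2%:R *: ImPhi Phi p.1 q.1).
Proof.
by rewrite /mulN /= -/(ImPhi _ _ _) ImPhiNl // scalerN !(addrC (- _)).
Qed.

Lemma mulN1 p : mulN Phi p oneN = p.
Proof. by case: p => z x; rewrite /mulN /= -/(ImPhi _ _ _) ImPhi0r // scaler0 !addr0. Qed.

Lemma mulNV p : mulN Phi p (invN p) = oneN.
Proof.
case: p => z x; rewrite /mulN /= -/(ImPhi _ _ _) ImPhiNr // ImPhi_diag //.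
by rewrite oppr0 scaler0 !subrr addr0.
Qed.

Lemma mulVN p : mulN Phi (invN p) p = oneN.
Proof. by rewrite mulVNE ImPhi_diag // scaler0 !subrr. Qed.

Lemma dilN1 p : dilN 1 p = p.
Proof. by case: p => z x; rewrite /dilN /= rmorph1 expr1n !scale1r. Qed.

Lemma dilN0 p : dilN 0 p = oneN.
Proof. by rewrite /dilN rmorph0 expr0n /= !scale0r. Qed.

Lemma dilN_comp s t p : dilN s (dilN t p) = dilN (s * t) p.
Proof. by rewrite /dilN /= !scalerA rmorphM exprMn. Qed.

Lemma dilN_oneN t : dilN t oneN = oneN.
Proof. by rewrite /dilN /= !scaler0. Qed.

Lemma hnorm_ge0 p : 0 <= hnorm p.
Proof.
case: hd => d0 dC dtri; have := dtri oneN p oneN.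
by rewrite (dC p) (d0 oneN oneN).2 // /hnorm; lra.
Qed.

Lemma hnorm_oneN : hnorm oneN = 0.
Proof. by case: hd => d0 _ _; apply/d0. Qed.

Lemma hnorm_eq0 p : hnorm p = 0 -> p = oneN.
Proof. by case: hd => d0 _ _ /d0. Qed.

Lemma d_hnorm p q : d p q = hnorm (mulN Phi (invN p) q).
Proof. by rewrite /hnorm -(hli (invN p) p q) mulVN. Qed.

Lemma hnormV p : hnorm (invN p) = hnorm p.
Proof. by case: hd => _ dC _; rewrite /hnorm -(hli p) mulN1 mulNV dC. Qed.

Lemma hnormM p q : hnorm (mulN Phi p q) <= hnorm p + hnorm q.
Proof.
case: hd => _ _ dtri; apply: le_trans (dtri _ p _) _.
by rewrite /hnorm -{2}(mulN1 p) hli.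
Qed.

Lemma hnorm_dil t p : 0 <= t -> hnorm (dilN t p) = t * hnorm p.
Proof.
rewrite le_eqVlt => /orP[/eqP <-|t0]; first by rewrite dilN0 hnorm_oneN mul0r.
by rewrite /hnorm -hh // dilN_oneN.
Qed.

Lemma hnorm_dil_le t p : 0 <= t <= 1 -> hnorm (dilN t p) <= hnorm p.
Proof. by case/andP=> t0 t1; rewrite hnorm_dil // ler_piMl ?hnorm_ge0. Qed.

Lemma hnorm_vertZ (a : R) x : `|a| <= 1 -> hnorm (0, a *: x) <= hnorm (0, x).
Proof.
have hpos b : 0 <= b <= 1 -> hnorm (0, b *: x) <= hnorm (0, x).
  case/andP=> b0 b1; have -> : ((0, b *: x) : Ngroup R n m) = dilN (Num.sqrt b) (0, x).
    by rewrite /dilN /= scaler0 sqr_sqrtr.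
  by apply: hnorm_dil_le; rewrite sqrtr_ge0 -sqrtr1 ler_sqrt.
move=> a1; have [a0|a0] := leP 0 a; first by apply: hpos; rewrite a0 -(ger0_norm a0).
have -> : ((0, a *: x) : Ngroup R n m) = invN (0, (- a) *: x).
  by rewrite /invN /= oppr0 scaleNr opprK.
by rewrite hnormV hpos // oppr_ge0 ltW //= -(ltr0_norm a0).
Qed.

Lemma hnorm_horizZ (a : R) z : `|a| <= 1 -> hnorm (a%:C *: z, 0) <= hnorm (z, 0).
Proof.
have hpos b : 0 <= b <= 1 -> hnorm (b%:C *: z, 0) <= hnorm (z, 0).
  move=> b01; have -> : ((b%:C *: z, 0) : Ngroup R n m) = dilN b (z, 0).
    by rewrite /dilN /= scaler0.
  exact: hnorm_dil_le.
move=> a1; have [a0|a0] := leP 0 a; first by apply: hpos; rewrite a0 -(ger0_norm a0).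
have -> : ((a%:C *: z, 0) : Ngroup R n m) = invN ((- a)%:C *: z, 0).
  by rewrite /invN /= oppr0 rmorphN scaleNr opprK.
by rewrite hnormV hpos // oppr_ge0 ltW //= -(ltr0_norm a0).
Qed.

Lemma hnorm_split z x : hnorm (z, x) <= hnorm (z, 0) + hnorm (0, x).
Proof.
have -> : ((z, x) : Ngroup R n m) = mulN Phi (z, 0) (0, x).
  by rewrite /mulN /= -/(ImPhi _ _ _) ImPhi0r // scaler0 !addr0 add0r.
exact: hnormM.
Qed.

Lemma hnorm_vert_sum (I : Type) (r : seq I) (F : I -> Fspace R m) :
  hnorm (0, \sum_(i <- r) F i) <= \sum_(i <- r) hnorm (0, F i).
Proof.
elim: r => [|i r IH]; first by rewrite !big_nil hnorm_oneN.
rewrite !big_cons; apply: le_trans (lerD (lexx _) IH).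
have -> : ((0, F i + \sum_(j <- r) F j) : Ngroup R n m) =
    mulN Phi (0, F i) (0, \sum_(j <- r) F j).
  by rewrite /mulN /= -/(ImPhi _ _ _) ImPhi0l // scaler0 !addr0.
exact: hnormM.
Qed.

Lemma hnorm_horizD z w :
  hnorm (z + w, 0) <= hnorm (z, 0) + hnorm (w, 0) + hnorm (0, - (2%:R *: ImPhi Phi z w)).
Proof.
have -> : ((z + w, 0) : Ngroup R n m) =
    mulN Phi (mulN Phi (z, 0) (w, 0)) (0, - (2%:R *: ImPhi Phi z w)).
  by rewrite /mulN /= -!/(ImPhi _ _ _) ImPhi0r // scaler0 !add0r !addr0 subrr.
by apply: le_trans (hnormM _ _) _; rewrite lerD2r hnormM.
Qed.

Lemma hnorm_horiz_sum (I : Type) (r : seq I) (v : I -> Espace R n) :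
  hnorm (\sum_(i <- r) v i, 0) <= \sum_(i <- r) hnorm (v i, 0) +
    \sum_(i <- r) \sum_(j <- r) hnorm (0, - (2%:R *: ImPhi Phi (v i) (v j))).
Proof.
pose c i j := hnorm (0, - (2%:R *: ImPhi Phi (v i) (v j))).
suff : hnorm (\sum_(i <- r) v i, 0) <=
    \sum_(i <- r) hnorm (v i, 0) + \sum_(i <- r) \sum_(j <- r) c i j by [].
elim: r => [|i r IH]; first by rewrite !big_nil hnorm_oneN addr0.
rewrite !big_cons; apply: le_trans (hnorm_horizD _ _) _.
have cross : hnorm (0, - (2%:R *: ImPhi Phi (v i) (\sum_(j <- r) v j))) <=
    c i i + \sum_(j <- r) c i j.
  rewrite ImPhi_sumr // scaler_sumr -sumrN; apply: le_trans (hnorm_vert_sum _ _) _.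
  by rewrite lerDr hnorm_ge0.
have tail : \sum_(i' <- r) \sum_(j <- r) c i' j <= \sum_(i' <- r) \sum_(j <- i :: r) c i' j.
  by apply: ler_sum => i' _; rewrite big_cons lerDr hnorm_ge0.
lra.
Qed.

Lemma hnorm_unit_box :
  exists K, forall p, `|coordE p.1| <= 1 -> `|p.2| <= 1 -> hnorm p <= K.
Proof.
exists (\sum_c hnorm (basisE c, 0) +
  \sum_c \sum_c' hnorm (0, - (2%:R *: ImPhi Phi (basisE c) (basisE c'))) +
  \sum_j hnorm (0, delta_mx 0 j)).
case=> z x /= z1 x1; apply: le_trans (hnorm_split z x) _; apply: lerD.
  have coord1 c : `|coordE z 0 c| <= 1 by apply: le_trans (le_coord_mx_norm _ _) z1.
  rewrite {1}(coordE_basis_sum z); apply: le_trans (hnorm_horiz_sum _ _) _.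
  apply: lerD; apply: ler_sum => c _; first exact: hnorm_horizZ.
  apply: ler_sum => c' _; rewrite ImPhiZl // ImPhiZr //.
  set I := ImPhi Phi _ _; set a := coordE z 0 c; set b := coordE z 0 c'.
  have -> : - (2%:R *: (a *: (b *: I))) = (a * b) *: - (2%:R *: I).
    by apply/rowP => j; rewrite !mxE; ring.
  apply: hnorm_vertZ; rewrite normrM.
  exact: mulr_ile1 (normr_ge0 _) (normr_ge0 _) (coord1 c) (coord1 c').
rewrite {1}(row_sum_delta x); apply: le_trans (hnorm_vert_sum _ _) _.
by apply: ler_sum => j _; apply/hnorm_vertZ/(le_trans (le_coord_mx_norm _ _) x1).
Qed.

Definition gauge p := `|coordE p.1| + Num.sqrt `|p.2|.

Lemma gauge_ge0 p : 0 <= gauge p.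
Proof. by rewrite addr_ge0 ?sqrtr_ge0. Qed.

Lemma gauge_oneN : gauge oneN = 0.
Proof. by rewrite /gauge raddf0 !normr0 sqrtr0 addr0. Qed.

Lemma gauge_eq0 p : gauge p = 0 -> p = oneN.
Proof.
case: p => z x /eqP; rewrite /gauge /= paddr_eq0 ?sqrtr_ge0 // sqrtr_eq0 normr_le0 normr_eq0.
by case/andP=> /eqP z0 /eqP ->; rewrite -(coordEK z) z0 raddf0.
Qed.

Lemma gauge_dil t p : 0 <= t -> gauge (dilN t p) = t * gauge p.
Proof.
move=> t0; rewrite /gauge /dilN /= coordEZ !normrZ (ger0_norm t0) sqrtrM ?mulr_ge0 //.
by rewrite -expr2 sqrtr_sqr (ger0_norm t0) mulrDr.
Qed.

Lemma norm_coord_le_gauge p : `|coordE p.1| <= gauge p.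
Proof. by rewrite lerDl sqrtr_ge0. Qed.

Lemma norm_vert_le_gauge p : `|p.2| <= gauge p ^+ 2.
Proof.
rewrite -(sqr_sqrtr (normr_ge0 p.2)) lerXn2r ?nnegrE ?sqrtr_ge0 ?gauge_ge0 //.
by rewrite lerDr normr_ge0.
Qed.

Lemma gauge_le_box p r : 0 <= r -> `|coordE p.1| <= r -> `|p.2| <= r ^+ 2 -> gauge p <= 2%:R * r.
Proof.
move=> r0 zr xr; rewrite mulr2n mulrDl mul1r lerD //.
by rewrite -(ger0_norm r0) -sqrtr_sqr ler_sqrt ?sqr_ge0.
Qed.

Lemma dilN_gauge1 p : p <> oneN -> exists2 s, 0 < s & exists2 q, gauge q = 1 & p = dilN s q.
Proof.
move=> p1; have s0 : 0 < gauge p.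
  by rewrite lt_neqAle gauge_ge0 andbT eq_sym; apply/eqP => /gauge_eq0.
exists (gauge p) => //; exists (dilN (gauge p)^-1 p).
  by rewrite gauge_dil ?invr_ge0 ?(ltW s0) // mulVf ?gt_eqF.
by rewrite dilN_comp divff ?gt_eqF // dilN1.
Qed.

Lemma hnorm_le_gauge : exists2 K, 0 <= K & forall p, hnorm p <= K * gauge p.
Proof.
have [K box] := hnorm_unit_box.
have K0 : 0 <= K by apply: le_trans (hnorm_ge0 oneN) (box _ _ _); rewrite /= ?raddf0 normr0.
exists K => // p; have [->|p1] := eqVneq p oneN; first by rewrite hnorm_oneN gauge_oneN mulr0.
have [s s0 [q q1 ->]] := dilN_gauge1 (elimN eqP p1).
have s0' := ltW s0; rewrite hnorm_dil // gauge_dil // q1 mulr1 mulrC ler_pM2r //.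
have := norm_coord_le_gauge q; have := norm_vert_le_gauge q; rewrite q1 expr1n.
by move=> x1 z1; apply: box.
Qed.

Definition decN (v : 'rV[R]_(n + n + m)) : Ngroup R n m := (of_coordE (lsubmx v), rsubmx v).
Definition encN p : 'rV[R]_(n + n + m) := row_mx (coordE p.1) p.2.

Lemma encNK : cancel encN decN.
Proof. by case=> z x; rewrite /encN /decN row_mxKl row_mxKr coordEK. Qed.

Lemma decNK : cancel decN encN.
Proof. by move=> v; rewrite /encN /decN of_coordEK hsubmxK. Qed.

Lemma dist_hnorm_le p q : `|hnorm p - hnorm q| <= d p q.
Proof.
case: hd => _ dC dtri; have := dtri oneN p q; have := dtri oneN q p.
by rewrite /hnorm (dC q p) ler_norml => h1 h2; apply/andP; split; lra.
Qed.

Lemma gauge_mulVN_decN (v w : 'rV[R]_(n + n + m)) :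
  gauge (mulN Phi (invN (decN v)) (decN w)) <=
  `|v - w| + Num.sqrt (`|v - w| * (1 + 2%:R * ImPhi_bound Phi * `|v|)).
Proof.
rewrite mulVNE /gauge /decN /= -raddfB of_coordEK -linearB /=.
have lvw := norm_lsubmx_le (v - w); have rvw := norm_rsubmx_le (v - w).
have lv := norm_lsubmx_le v.
rewrite -opprB linearN normrN; apply: lerD => //; rewrite ler_sqrt ?mulr_ge0 //; last first.
  by rewrite addr_ge0 // mulr_ge0 ?mulr_ge0 ?ImPhi_bound_ge0.
set z := of_coordE (lsubmx v); set D := of_coordE (lsubmx w) - z.
have -> : ImPhi Phi z (of_coordE (lsubmx w)) = ImPhi Phi z D.
  by rewrite ImPhiDr // ImPhiNr // ImPhi_diag // subr0.
have hI : `|ImPhi Phi z D| <= ImPhi_bound Phi * `|v| * `|v - w|.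
  apply: le_trans (norm_ImPhi_le hPhi z D) _.
  rewrite /z /D -raddfB !of_coordEK -linearB -opprB linearN normrN.
  by rewrite ler_pM ?mulr_ge0 ?ImPhi_bound_ge0 // ler_wpM2l ?ImPhi_bound_ge0.
apply: le_trans (ler_normB _ _) _; rewrite normrZ ger0_norm // -linearB -opprB linearN normrN.
have := ImPhi_bound_ge0 Phi; have := normr_ge0 v; nra.
Qed.

Lemma hnorm_decN_continuous : continuous (fun v => hnorm (decN v)).
Proof.
have [K K0 hK] := hnorm_le_gauge.
move=> v; apply/(cvgrPdist_lt (FF := nbhs_filter v)) => e e0.
set M := 1 + 2%:R * ImPhi_bound Phi * `|v|.
have M1 : 1 <= M by rewrite lerDl !mulr_ge0 ?ImPhi_bound_ge0.
set r := e / (2%:R * (K + 1)).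
have r0 : 0 < r by rewrite divr_gt0 // mulr_gt0 //; lra.
have Kr : K * (r + r) < e.
  have -> : e = 2%:R * (K + 1) * r by rewrite /r mulrC divfK // gt_eqF // mulr_gt0 //; lra.
  nra.
set eta := Num.min r (r ^+ 2 / M).
have eta0 : 0 < eta by rewrite lt_min r0 divr_gt0 ?exprn_gt0 //; lra.
apply: (@filterS _ _ (nbhs_filter v) _ _ _ (near_ball v _ eta0)) => w.
rewrite -ball_normE /= => vw.
have vw_r : `|v - w| <= r by rewrite ltW // (lt_le_trans vw) // ge_min lexx.
have vw_r2 : `|v - w| * M <= r ^+ 2.
  by rewrite -ler_pdivlMr ?(lt_le_trans ltr01) // ltW // (lt_le_trans vw) // ge_min lexx orbT.
have sqrt_r : Num.sqrt (`|v - w| * M) <= r.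
  by rewrite -(ger0_norm (ltW r0)) -sqrtr_sqr; apply: ler_wsqrtr.
apply: le_lt_trans (dist_hnorm_le _ _) _; rewrite d_hnorm.
apply: le_lt_trans (hK _) _; apply: le_lt_trans Kr.
by apply: (ler_wpM2l K0); apply: le_trans (gauge_mulVN_decN v w) _; apply: lerD.
Qed.

Lemma hnorm_ge_on_gauge1 : exists2 c, 0 < c & forall q, gauge q = 1 -> c <= hnorm q.
Proof.
pose A := [set v : 'rV[R]_(n + n + m) | 4^-1 <= `|v| <= 1].
have encA q : gauge q = 1 -> A (encN q).
  move=> q1; have := norm_coord_le_gauge q; have := norm_vert_le_gauge q.
  rewrite q1 expr1n => x1 z1; rewrite /A /= norm_row_mx_le // andbT.
  have := norm_lsubmx_le (encN q); have := norm_rsubmx_le (encN q).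
  rewrite row_mxKl row_mxKr; move: q1; rewrite /gauge.
  have := sqr_sqrtr (normr_ge0 q.2); have := sqrtr_ge0 `|q.2|; have := normr_ge0 (coordE q.1).
  nra.
have [A0|A0] := pselect (A !=set0); last first.
  by exists 1 => // q /encA Aq; exfalso; apply: A0; exists (encN q).
have cA : compact A.
  apply: bounded_closed_compact.
    exists 1; split; first exact: num_real.
    by move=> M M1 v /andP[_ v1]; apply: le_trans v1 (ltW M1).
  have -> : A = Num.norm @^-1` `[4^-1, 1] by apply/seteqP; split => v /=; rewrite in_itv.
  by apply: (continuous_closedP _).1; [exact: norm_continuous | exact: itv_closed].
have [v0 Av0 vmin] := EVT_min_rV A0 cA (continuous_subspaceT hnorm_decN_continuous).
exists (hnorm (decN v0)); last by move=> q /encA Aq; rewrite -(encNK q) vmin ?inE.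
rewrite lt_neqAle hnorm_ge0 andbT eq_sym; apply/eqP => /hnorm_eq0 /(congr1 encN).
rewrite decNK /encN /= raddf0 row_mx0 => v00.
by move: Av0; rewrite inE v00 /A /= normr0 => /andP[]; lra.
Qed.

Lemma gauge_le_hnorm : exists2 c, 0 < c & forall p, c * gauge p <= hnorm p.
Proof.
have [c c0 hc] := hnorm_ge_on_gauge1; exists c => // p.
have [->|p1] := eqVneq p oneN; first by rewrite hnorm_oneN gauge_oneN mulr0.
have [s s0 [q q1 ->]] := dilN_gauge1 (elimN eqP p1).
by have s0' := ltW s0; rewrite hnorm_dil // gauge_dil // q1 mulr1 mulrC ler_pM2l // hc.
Qed.

End HomogeneousNorm.

Lemma lattice_dist_ge (T K : Type) (R : realType) (dist : T -> T -> R) (a : K -> T) delta Rc :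
  (forall t, dist t t = 0) -> 0 < delta -> is_lattice dist a delta Rc ->
  forall k k', k <> k' -> delta <= dist (a k) (a k').
Proof.
move=> d0 delta0 [disj _] k k' kk'; rewrite leNgt; apply/negP => close.
by apply: (disj k k' kk' (a k')); rewrite /ball_of d0.
Qed.

Lemma distE_xx (R : realType) (n : nat) (z : Espace R n) : distE z z = 0.
Proof. by rewrite distE_l2norm subrr raddf0 l2norm0. Qed.

Lemma distF_xx (R : realType) (m : nat) (x : Fspace R m) : distF x x = 0.
Proof. by rewrite /distF -/(l2norm _) subrr l2norm0. Qed.

Section ProductLattice.
Variables (R : realType) (n m : nat) (Phi : Espace R n -> Espace R n -> FCspace R m)
  (d : Ngroup R n m -> Ngroup R n m -> R).
Hypotheses (hPhi : hermitian_map Phi) (hd : is_distance d) (hli : left_invariant Phi d).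
Variables (delta Rc : R) (J J' : Type) (x : J -> Fspace R m) (zeta : J' -> Espace R n).
Hypotheses (delta0 : 0 < delta) (Rc1 : 1 < Rc)
  (xlat : is_lattice (@distF R m) x (delta ^+ 2) (Rc ^+ 2))
  (zlat : is_lattice (@distE R n) zeta delta Rc).

Let point (jj : J * J') : Ngroup R n m := (zeta jj.2, x jj.1).

Lemma product_lattice_gauge_ge a b : a <> b ->
  delta <= (n + n + m).+1%:R * gauge (mulN Phi (invN (point a)) (point b)).
Proof.
case: a b => [j j'] [k k'] ab; set N : R := (n + n + m).+1%:R.
have N1 : 1 <= N by rewrite ler1n.
set p := mulN Phi _ _; have G0 := gauge_ge0 p.
have := norm_coord_le_gauge p; have := norm_vert_le_gauge p.
rewrite {1 3}/p (mulVNE hPhi) /= => hx hz.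
have [ej|j'k'] := pselect (j' = k').
  have jk : j <> k by move=> jk; apply: ab; rewrite jk ej.
  rewrite -ej ImPhi_diag // scaler0 subr0 in hx.
  have mN : m.+1%:R <= N by rewrite ler_nat ltnS leq_addl.
  rewrite -ler_sqr ?nnegrE ?mulr_ge0 ?(ltW delta0) // exprMn.
  have := lattice_dist_ge (@distF_xx R m) (exprn_gt0 2 delta0) xlat jk.
  rewrite /distF -/(l2norm _) => /le_trans/(_ (l2norm_le _))/le_trans; apply.
  rewrite -opprB normrN; apply: le_trans (ler_wpM2l (ler0n _ _) hx) _.
  by apply: ler_wpM2r; [exact: sqr_ge0 | nra].
have := lattice_dist_ge (@distE_xx R n) delta0 zlat j'k'.
rewrite distE_l2norm => /le_trans/(_ (l2norm_le _))/le_trans; apply.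
rewrite coordEB -opprB normrN -coordEB; apply: le_trans (ler_wpM2l (ler0n _ _) hz) _.
by apply: ler_wpM2r => //; rewrite ler_nat ltnS leq_addr.
Qed.

Lemma product_lattice_disjoint c : 0 < c -> (forall p, c * gauge p <= hnorm d p) ->
  forall a b, a <> b -> forall y,
  ~ (ball_of d (point a) (c / (2%:R * (n + n + m).+1%:R) * delta) y /\
     ball_of d (point b) (c / (2%:R * (n + n + m).+1%:R) * delta) y).
Proof.
move=> c0 hc a b ab y [ay yb]; set N : R := (n + n + m).+1%:R.
have N0 : 0 < N by rewrite ltr0n.
set p := mulN Phi (invN (point a)) (point b).
have close : N * hnorm d p < c * delta.
  rewrite -d_hnorm //; case: hd => _ dC dtri.
  rewrite /ball_of (dC (point b)) -/N in ay yb; set e := c / _ * delta in ay yb.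
  have -> : c * delta = N * (2%:R * e) by rewrite /e; field; lra.
  by rewrite ltr_pM2l //; have := dtri (point a) y (point b); lra.
have := ler_wpM2l (ltW c0) (product_lattice_gauge_ge ab).
have := ler_wpM2l (ltW N0) (hc p); rewrite -/p; lra.
Qed.

Lemma product_lattice_cover K : 0 <= K -> (forall p, hnorm d p <= K * gauge p) ->
  forall y, exists a, d (point a) y < (2%:R * K + 1) * (Rc * delta).
Proof.
move=> K0 hK [z y].
have [j' hj'] := zlat.2 z; set y' := y - 2%:R *: ImPhi Phi (zeta j') z.
have [j hj] := xlat.2 y'; exists (j, j'); rewrite /ball_of in hj hj'.
rewrite (d_hnorm hPhi hli) (mulVNE hPhi) /=; set r := Rc * delta.
have r0 : 0 < r by rewrite mulr_gt0 // (lt_trans ltr01 Rc1).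
apply: le_lt_trans (hK _) _; apply: (@le_lt_trans _ _ (K * (2%:R * r))); last by nra.
apply: (ler_wpM2l K0); apply: gauge_le_box => /=; first exact: ltW.
  rewrite coordEB -opprB normrN -coordEB; apply: le_trans (mx_norm_le_l2norm _) _.
  by rewrite -distE_l2norm ltW.
have -> : y - x j - 2%:R *: ImPhi Phi (zeta j') z = - (x j - y') by rewrite /y' opprB addrAC.
by rewrite normrN /r exprMn; apply: le_trans (mx_norm_le_l2norm _) (ltW hj).
Qed.

End ProductLattice.

Theorem lemma6p1 (R : realType) (n m : nat)
  (Phi : Espace R n -> Espace R n -> FCspace R m)
  (d : Ngroup R n m -> Ngroup R n m -> R) :
  hermitian_map Phi ->
  is_distance d -> left_invariant Phi d -> homogeneous1 d ->
  exists C C' : R, 0 < C /\ 0 < C' /\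
    forall (delta Rc : R), 0 < delta -> 1 < Rc ->
    forall (J J' : Type) (x : J -> Fspace R m) (zeta : J' -> Espace R n),
      is_lattice (@distF R m) x (delta ^+ 2) (Rc ^+ 2) ->
      is_lattice (@distE R n) zeta delta Rc ->
      is_lattice d (fun jj : J * J' => (zeta jj.2, x jj.1) : Ngroup R n m)
        (C * delta) (C' * Rc).
Proof.
move=> hPhi hd hli hh.
have [c c0 hc] := gauge_le_hnorm hPhi hd hli hh.
have [K K0 hK] := hnorm_le_gauge hPhi hd hli hh.
set C := c / (2%:R * (n + n + m).+1%:R).
have C0 : 0 < C by rewrite divr_gt0 ?mulr_gt0 ?ltr0n.
exists C, ((2%:R * K + 1) / C); split => //; split; first by rewrite divr_gt0 //; lra.
move=> delta Rc delta0 Rc1 J J' x zeta xlat zlat; split.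
  exact: (product_lattice_disjoint hPhi hd hli delta0 xlat zlat c0 hc).
move=> y; have [a ha] := product_lattice_cover hPhi hli delta0 Rc1 xlat zlat K0 hK y.
exists a; rewrite /ball_of.
suff -> : (2%:R * K + 1) / C * Rc * (C * delta) = (2%:R * K + 1) * (Rc * delta) by [].
by field; exact: lt0r_neq0.
Qed.
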